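(* Let $(\Phi_i)_{i\in\mathbb{Z}}$ be a family of reduced indefinite binary quadratic forms over $\mathbb{Q}((1/T))$ of the same discriminant $D$, written $\Phi_i=((-1)^iA_i,\,B_i,\,(-1)^{i+1}A_{i+1})$, such that for every $i$ the form $\Phi_{i+1}$ is obtained from $\Phi_i$ by a transformation $\begin{pmatrix}0&1\\-1&\delta_i\end{pmatrix}$ with $\delta_i\in\mathbb{Q}[T]$. Let $Q$ be a binary quadratic form properly equivalent to $\Phi_0$. Then $$m(Q)=\inf_{i\in\mathbb{Z}}\deg A_i.$$
   Context: $\mathbb{Q}((1/T))$ is the field of formal Laurent series in $1/T$ over $\mathbb{Q}$; $\deg$ of a nonzero series is the exponent of its leading term, $\deg0=-\infty$. A binary quadratic form $(A,B,C)$ is $AX^2+BXY+CY^2$ with $A,B,C\in\mathbb{Q}((1/T))$ not all in $\mathbb{Q}(T)$, discriminant $D=B^2-4AC$; indefinite means $D\ne0$ is a square in $\mathbb{Q}((1/T))$; a square root $\sqrt D$ is fixed for the discriminant $D$. If $A\ne0$, first root $f=\frac{\sqrt D-B}{2A}$, second root $s=\frac{-\sqrt D-B}{2A}$. Reduced means $A\ne0$, $f\ne0$, $\deg f<0<\deg s$. A matrix $\begin{pmatrix}\alpha&\beta\\\gamma&\delta\end{pmatrix}$ over $\mathbb{Q}[T]$ transforms $q(x,y)$ into $q(\alpha X+\beta Y,\gamma X+\delta Y)$; two forms are properly equivalent if one is transformed into the other by such a matrix of determinant $1$. $m(Q)=\inf\{\deg Q(X,Y):X,Y\in\mathbb{Q}[T],\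 (X,Y)\ne(0,0)\}$. *)

(* The field Q((1/T)) of formal Laurent series in 1/T is
   modelled by coefficient functions  int -> rat  (coefficient of T^n)
   whose support is bounded above (predicate [isLS]). *)
From Stdlib Require Import ClassicalEpsilon.
From mathcomp Require Import all_boot all_order all_algebra.
From mathcomp Require Import all_classical all_reals.
Set Implicit Arguments. Unset Strict Implicit. Unset Printing Implicit Defensive.
Import Order.TTheory GRing.Theory Num.Theory.
Local Open Scope ring_scope.

Definition series := int -> rat.

Definition isLS (f : series) : Prop :=
  exists N : int, forall n : int, N < n -> f n = 0.

Definition s0 : series := fun _ => 0.
Definition sadd (f g : series) : series := fun n => f n + g n.
Definition sopp (f : series) : series := fun n => - f n.
Definition ssub (f g : series) : series := fun n => f n - g n.
Definition sscale (c : rat) (f : series) : series := fun n => c * f n.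

Definition lsb (f : series) : int :=
  epsilon (inhabits 0) (fun N : int => forall n : int, N < n -> f n = 0).

(* Cauchy product: (f g)_n = sum_k f_k g_(n-k), k ranging over the finite
   window  n - lsb g <= k <= lsb f  outside of which the terms vanish. *)
Definition smul (f g : series) : series := fun n =>
  let lo := n - lsb g in
  \sum_(j < absz (lsb f - lo + 1)) f (lo + j%:Z) * g (n - (lo + j%:Z)).

Definition polyS (p : {poly rat}) : series := fun n =>
  match n with Posz m => p`_m | Negz _ => 0 end.

Definition sone : series := polyS 1.

Definition sinv (f : series) : series :=
  epsilon (inhabits s0) (fun g => isLS g /\ smul f g = sone).
Definition sdiv (f g : series) : series := smul f (sinv g).

Definition deg (f : series) : \bar int :=
  epsilon (inhabits -oo%E) (fun d : \bar int =>
    (f = s0 /\ d = -oo%E) \/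
    exists n : int, d = n%:E /\ f n != 0 /\ forall k : int, n < k -> f k = 0).

Definition einf (S : set (\bar int)) : \bar int :=
  epsilon (inhabits -oo%E) (fun m : \bar int =>
    (forall x, S x -> (m <= x)%E) /\
    (forall m', (forall x, S x -> (m' <= x)%E) -> (m' <= m)%E)).

Definition inQT (f : series) : Prop :=
  exists p q : {poly rat}, q != 0 /\ smul (polyS q) f = polyS p.

(* binary quadratic form  A X^2 + B X Y + C Y^2 *)
Record bqf := BQF { qA : series; qB : series; qC : series }.

Definition is_bqf (q : bqf) : Prop :=
  [/\ isLS (qA q), isLS (qB q), isLS (qC q) &
      ~ (inQT (qA q) /\ inQT (qB q) /\ inQT (qC q))].

Definition disc (q : bqf) : series :=
  ssub (smul (qB q) (qB q)) (sscale 4 (smul (qA q) (qC q))).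

Definition indefinite (q : bqf) : Prop :=
  disc q <> s0 /\ exists r : series, isLS r /\ smul r r = disc q.

Definition first_root (sqD : series) (q : bqf) : series :=
  sdiv (ssub sqD (qB q)) (sscale 2 (qA q)).
Definition second_root (sqD : series) (q : bqf) : series :=
  sdiv (ssub (sopp sqD) (qB q)) (sscale 2 (qA q)).

Definition reduced (sqD : series) (q : bqf) : Prop :=
  [/\ qA q <> s0, first_root sqD q <> s0,
      (deg (first_root sqD q) < 0%:E)%E & (0%:E < deg (second_root sqD q))%E].

(* q(alpha X + beta Y, gamma X + delta Y) *)
Definition transform (a b c d : {poly rat}) (q : bqf) : bqf :=
  let al := polyS a in let be := polyS b in
  let ga := polyS c in let de := polyS d in
  let A := qA q in let B := qB q in let C := qC q in
  BQF (sadd (sadd (smul A (smul al al)) (smul B (smul al ga))) (smul C (smul ga ga)))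
      (sadd (sadd (sscale 2 (smul A (smul al be)))
                  (smul B (sadd (smul al de) (smul be ga))))
            (sscale 2 (smul C (smul ga de))))
      (sadd (sadd (smul A (smul be be)) (smul B (smul be de))) (smul C (smul de de))).

Definition properly_equiv (q1 q2 : bqf) : Prop :=
  (exists a b c d : {poly rat}, a * d - b * c = 1 /\ transform a b c d q1 = q2) \/
  (exists a b c d : {poly rat}, a * d - b * c = 1 /\ transform a b c d q2 = q1).

Definition evalq (q : bqf) (X Y : {poly rat}) : series :=
  sadd (sadd (smul (qA q) (polyS (X * X))) (smul (qB q) (polyS (X * Y))))
       (smul (qC q) (polyS (Y * Y))).

Definition mQ (q : bqf) : \bar int :=
  einf [set d | exists X Y : {poly rat}, (X, Y) != (0, 0) /\ d = deg (evalq q X Y)].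

Definition Phi (A B : int -> series) (i : int) : bqf :=
  BQF (sscale ((-1) ^ i) (A i)) (B i) (sscale ((-1) ^ (i + 1)) (A (i + 1))).

(* Over the field of Laurent series write Phi_i = (a_i, b_i, a_(i+1)) with roots f_i, s_i,
   so that Phi_i(X, Y) = a_i (X - f_i Y) (X - s_i Y) and deg f_i < 0 < deg s_i.  The
   transformation from Phi_i to Phi_(i+1) acts on vectors by (X, Y) |-> (delta_i X - Y, X)
   and on roots by f_(i+1) = delta_i - 1/f_i, so along the orbit of a polynomial vector
   deg (X - f_j Y) increases strictly.  Where it changes sign, deg f_j <= deg (X - f_j Y) < 0,
   hence deg (X - s_j Y) = deg s_j + deg Y and
   deg Phi_j(X, Y) >= deg a_j + deg f_j + deg s_j = deg a_(j+1).
   Conversely a_i = Phi_i(1, 0), and Q and all the Phi_i take the same values.  The same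
   orbits give a descent showing that f_i, s_i are not in Q(T), so no value vanishes. *)

From HB Require Import structures.
From Stdlib Require Import ClassicalEpsilon.
From mathcomp Require Import all_boot all_order all_algebra.
From mathcomp Require Import all_classical all_reals.
From mathcomp Require Import zify ring.
Set Implicit Arguments. Unset Strict Implicit. Unset Printing Implicit Defensive.
Import Order.TTheory GRing.Theory Num.Theory.
Local Open Scope ring_scope.

(** * Formal Laurent series in 1/T *)

Definition vanish_above (f : series) (N : int) := forall n : int, N < n -> f n = 0.

Lemma vanish_above_le f N M : vanish_above f N -> N <= M -> vanish_above f M.
Proof. by move=> fN NM n Mn; apply: fN; lia. Qed.

Lemma vanish_above_isLS f N : vanish_above f N -> isLS f.
Proof. by exists N. Qed.

Lemma vanish_above_lsb f : isLS f -> vanish_above f (lsb f).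
Proof. exact: epsilon_spec. Qed.

Lemma vanish_above_sadd f g N : vanish_above f N -> vanish_above g N ->
  vanish_above (sadd f g) N.
Proof. by move=> fN gN n Nn; rewrite /sadd fN ?gN ?addr0. Qed.

Lemma vanish_above_polyS p : vanish_above (polyS p) (size p)%:Z.
Proof. by move=> [k|k] //; rewrite ltz_nat => /ltnW; apply: nth_default. Qed.

Lemma coef_neq0_le (f : series) N n : f n != 0 -> vanish_above f N -> n <= N.
Proof. by move=> fn0 fN; case: lerP => // /fN fn; rewrite fn eqxx in fn0. Qed.

Lemma sum_window_sub (F : int -> rat) (lo a : int) (len w : nat) :
  lo <= a -> a + w%:Z <= lo + len%:Z ->
  (forall k, F k != 0 -> a <= k < a + w%:Z) ->
  \sum_(j < len) F (lo + j%:Z) = \sum_(j < w) F (a + j%:Z).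
Proof.
move=> lo_a hi_le supp.
have [d da] : exists d : nat, a = lo + d%:Z by exists (absz (a - lo)); lia.
subst a.
have [e ->] : exists e, len = (d + (w + e))%N by exists (len - (d + w))%N; lia.
have out j : ~~ (lo + d%:Z <= lo + j%:Z < lo + d%:Z + w%:Z) -> F (lo + j%:Z) = 0.
  by move=> j_out; apply/eqP; apply: contraNT j_out => /supp.
rewrite big_split_ord /= big1 ?add0r => [|j _]; last first.
  by apply: out; move: (ltn_ord j) => /=; lia.
rewrite big_split_ord /= [X in _ + X]big1 ?addr0 => [|j _]; last first.
  by apply: out; move: (ltn_ord j) => /=; lia.
by apply: eq_bigr => j _; congr F; rewrite /=; lia.
Qed.

Lemma sum_window_eq (F : int -> rat) lo (len : nat) lo' (len' : nat) :
  (forall k, F k != 0 -> lo <= k < lo + len%:Z) ->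
  (forall k, F k != 0 -> lo' <= k < lo' + len'%:Z) ->
  \sum_(j < len) F (lo + j%:Z) = \sum_(j < len') F (lo' + j%:Z).
Proof.
move=> supp supp'; pose m : int := Num.min lo lo'.
pose M := absz (Num.max (lo + len%:Z) (lo' + len'%:Z) - m)%R.
by rewrite -(@sum_window_sub F m lo M len) -1?(@sum_window_sub F m lo' M len') //; lia.
Qed.

(* Read from the top down, the coefficients of [smul f g] are those of the product of
   the truncations [top_poly], so [smul] inherits the ring laws of [{poly rat}]. *)
Definition top_poly (f : series) (N : int) (K : nat) : {poly rat} :=
  \poly_(i < K) f (N - i%:Z).

Lemma top_poly_coef f N K i : (i < K)%N -> (top_poly f N K)`_i = f (N - i%:Z).
Proof. by move=> iK; rewrite coef_poly iK. Qed.

Lemma vanish_above_smul f g Nf Ng : vanish_above f Nf -> vanish_above g Ng ->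
  vanish_above (smul f g) (Nf + Ng).
Proof.
move=> fN gN n n_gt; rewrite /smul big1 // => j _; set k := (_ + _)%R.
by case: (lerP k Nf) => k_le; [rewrite gN ?mulr0 //; lia | rewrite fN ?mul0r].
Qed.

Lemma smul_top_coef f g Nf Ng K (m : nat) :
  vanish_above f Nf -> vanish_above g Ng -> (m < K)%N ->
  smul f g (Nf + Ng - m%:Z) = (top_poly f Nf K * top_poly g Ng K)`_m.
Proof.
move=> fN gN mK; rewrite mulrC coefM /smul; set n := Nf + Ng - m%:Z.
have fL := vanish_above_lsb (vanish_above_isLS fN).
have gL := vanish_above_lsb (vanish_above_isLS gN).
pose F k := f k * g (n - k).
have suppF N N' k : vanish_above f N -> vanish_above g N' -> F k != 0 ->
    k <= N /\ n - k <= N'.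
  move=> fN' gN'; rewrite mulf_eq0 negb_or => /andP[fk gk].
  by split; apply: coef_neq0_le; eassumption.
transitivity (\sum_(j < m.+1) F (Nf - m%:Z + j%:Z)).
  apply: sum_window_eq => k Fk.
    by have := suppF _ _ _ fL gL Fk; lia.
  by have := suppF _ _ _ fN gN Fk; rewrite /n; lia.
apply: eq_bigr => j _; have jm := ltn_ord j.
rewrite !top_poly_coef; try lia.
by rewrite /F mulrC; congr (g _ * f _); rewrite /n; lia.
Qed.

Lemma eq_series_vanish_above f g N : vanish_above f N -> vanish_above g N ->
  (forall m : nat, f (N - m%:Z) = g (N - m%:Z)) -> f = g.
Proof.
move=> fN gN fg; apply: funext => n.
case: (lerP n N) => [nN|Nn]; last by rewrite fN ?gN.
by have -> : n = N - (absz (N - n))%:Z by lia.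
Qed.

Lemma coefM_eq_low (p q p' q' : {poly rat}) m :
  (forall i, (i <= m)%N -> p`_i = p'`_i) -> (forall i, (i <= m)%N -> q`_i = q'`_i) ->
  (p * q)`_m = (p' * q')`_m.
Proof.
move=> pp qq; rewrite !coefM; apply: eq_bigr => i _; have im := ltn_ord i.
by rewrite pp ?qq //; lia.
Qed.

Lemma top_poly_smul_coef f g Nf Ng K m : vanish_above f Nf -> vanish_above g Ng ->
  (m < K)%N -> (top_poly (smul f g) (Nf + Ng) K)`_m = (top_poly f Nf K * top_poly g Ng K)`_m.
Proof. by move=> fN gN mK; rewrite top_poly_coef // (smul_top_coef (K := K) fN gN). Qed.

Lemma smulA f g h Nf Ng Nh :
  vanish_above f Nf -> vanish_above g Ng -> vanish_above h Nh ->
  smul (smul f g) h = smul f (smul g h).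
Proof.
move=> fN gN hN; have fgN := vanish_above_smul fN gN; have ghN := vanish_above_smul gN hN.
apply: (@eq_series_vanish_above _ _ (Nf + Ng + Nh)); rewrite -?addrA.
- by rewrite addrA; apply: vanish_above_smul.
- exact: vanish_above_smul.
move=> m; rewrite addrA (smul_top_coef (K := m.+1) fgN hN) // -addrA.
rewrite (smul_top_coef (K := m.+1) fN ghN) //.
rewrite (@coefM_eq_low _ _ (top_poly f Nf m.+1 * top_poly g Ng m.+1) (top_poly h Nh m.+1)).
- rewrite [RHS](@coefM_eq_low _ _ (top_poly f Nf m.+1) (top_poly g Ng m.+1 * top_poly h Nh m.+1)).
  + by rewrite mulrA.
  + by [].
  + by move=> i im; rewrite top_poly_smul_coef.
- by move=> i im; rewrite top_poly_smul_coef.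
- by [].
Qed.

Lemma smulC f g Nf Ng : vanish_above f Nf -> vanish_above g Ng -> smul f g = smul g f.
Proof.
move=> fN gN; apply: (@eq_series_vanish_above _ _ (Nf + Ng)); first exact: vanish_above_smul.
  by rewrite addrC; apply: vanish_above_smul.
move=> m; rewrite (smul_top_coef (K := m.+1) fN gN) // [Nf + Ng]addrC.
by rewrite (smul_top_coef (K := m.+1) gN fN) // mulrC.
Qed.

Lemma top_polyD f g N K : top_poly (sadd f g) N K = top_poly f N K + top_poly g N K.
Proof. by apply/polyP => i; rewrite coefD !coef_poly; case: ifP; rewrite ?addr0. Qed.

Lemma smulDl f g h N Nh :
  vanish_above f N -> vanish_above g N -> vanish_above h Nh ->
  smul (sadd f g) h = sadd (smul f h) (smul g h).
Proof.
move=> fN gN hN; have fgN := vanish_above_sadd fN gN.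
apply: (@eq_series_vanish_above _ _ (N + Nh)); first exact: vanish_above_smul.
  by apply: vanish_above_sadd; apply: vanish_above_smul.
move=> m; rewrite /sadd !(smul_top_coef (K := m.+1) _ hN) //.
by rewrite top_polyD mulrDl coefD.
Qed.

Lemma smul_monomial c (k : nat) f N : vanish_above f N ->
  smul (polyS (c *: 'X^k)) f = fun n => c * f (n - k%:Z).
Proof.
move=> fN.
have mon : vanish_above (polyS (c *: 'X^k)) k%:Z.
  by move=> [j|j] kj //=; rewrite coefZ coefXn; case: eqP => [jk|]; [lia | rewrite mulr0].
apply: (@eq_series_vanish_above _ _ (k%:Z + N)); first exact: vanish_above_smul.
  by move=> n n_gt; rewrite fN ?mulr0 //; lia.
move=> m; rewrite (smul_top_coef (K := m.+1) mon fN) //.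
have -> : top_poly (polyS (c *: 'X^k)) k m.+1 = c%:P.
  apply/polyP => i; rewrite coefC coef_poly; case: ltnP => im; last by case: eqP => // i0; lia.
  case: (ltnP k i) => ki.
    have -> : k%:Z - i%:Z = Negz (i - k).-1 by rewrite NegzE; lia.
    by case: eqP => // i0; lia.
  have -> : k%:Z - i%:Z = Posz (k - i) by lia.
  rewrite /= coefZ coefXn; case: (i =P 0%N) => [->|i0]; first by rewrite subn0 eqxx mulr1.
  by rewrite (_ : (k - i == k)%N = false) ?mulr0 //; apply/eqP; lia.
by rewrite coefCM top_poly_coef //; congr (c * f _); lia.
Qed.

Lemma series_neq0 f : f <> s0 -> exists k, f k != 0.
Proof.
move=> f0; apply: contrapT => f_eq0; apply: f0; apply: funext => k.
by apply/eqP; apply: contrapT => fk; apply: f_eq0; exists k; apply/negP.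
Qed.

Lemma exists_top_coef f N : vanish_above f N -> f <> s0 ->
  exists n, f n != 0 /\ vanish_above f n.
Proof.
move=> fN /series_neq0 [k fk]; have kN := coef_neq0_le fk fN.
have ex : exists j : nat, f (N - j%:Z) != 0.
  by exists (absz (N - k)); have -> : N - (absz (N - k))%:Z = k by lia.
case: (ex_minnP ex) => j fj j_min; exists (N - j%:Z); split => // n n_gt.
case: (lerP n N) => [nN|]; last exact: fN.
have n_eq : n = N - (absz (N - n))%:Z by lia.
apply/eqP; apply: contraT; rewrite n_eq => /j_min; lia.
Qed.

(* For [k <= m], [inv_coefs a m k] is the [k]-th coefficient of the inverse of the
   power series [\sum_i a i X^i]. *)
Fixpoint inv_coefs (a : nat -> rat) (m : nat) : nat -> rat :=
  if m is m'.+1 then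
    fun k => if (k <= m')%N then inv_coefs a m' k
             else - (a 0%N)^-1 * \sum_(i < m'.+1) a i.+1 * inv_coefs a m' (m' - i)%N
  else fun _ => (a 0%N)^-1.

Lemma inv_coefs_stable a m k : (k <= m)%N -> inv_coefs a m k = inv_coefs a k k.
Proof.
elim: m => [|m IH] km; first by have -> : k = 0%N by lia.
rewrite /=; case: ifP => [/IH //|km'].
have k_eq : k = m.+1 by lia.
by rewrite k_eq /= ltnn.
Qed.

Lemma inv_coefs_rec a m : inv_coefs a m.+1 m.+1 =
  - (a 0%N)^-1 * \sum_(i < m.+1) a i.+1 * inv_coefs a (m - i)%N (m - i)%N.
Proof.
rewrite /= ltnn; congr (_ * _); apply: eq_bigr => i _.
by rewrite inv_coefs_stable //; lia.
Qed.

Lemma vanish_above_sone : vanish_above sone 0.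
Proof. by move=> [k|k] //; rewrite /sone /= coef1; case: eqP => // ->. Qed.

Lemma smul_inverse_exists f : isLS f -> f <> s0 -> exists g, isLS g /\ smul f g = sone.
Proof.
move=> [N0 fN0] f0; have [N [fN0' fN]] := exists_top_coef fN0 f0.
pose a i := f (N - i%:Z); pose b k := inv_coefs a k k.
pose g : series := fun n => if n <= - N then b (absz (- N - n)) else 0.
have gN : vanish_above g (- N) by move=> n n_gt; rewrite /g ifN //; lia.
exists g; split; first exact: vanish_above_isLS gN.
apply: (@eq_series_vanish_above _ _ (N + - N)); first exact: vanish_above_smul.
  by rewrite subrr; apply: vanish_above_sone.
move=> m; rewrite (smul_top_coef (K := m.+1) fN gN) // subrr coefM.
have -> : sone (0 - m%:Z) = (m == 0%N)%:R.
  case: m => [|m]; first by rewrite subr0 /sone /= coef1.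
  by rewrite (_ : 0 - m.+1%:Z = Negz m) // NegzE; lia.
have fa i : (i <= m)%N -> (top_poly f N m.+1)`_i = a i by move=> im; rewrite top_poly_coef.
have gb i : (i <= m)%N -> (top_poly g (- N) m.+1)`_i = b i.
  by move=> im; rewrite top_poly_coef // /g ifT; [congr b|]; lia.
have a0 : a 0%N != 0 by rewrite /a subr0.
case: m fa gb => [|m] fa gb; first by rewrite big_ord1 fa // gb //= mulfV.
rewrite big_ord_recl fa // gb // subn0 /b inv_coefs_rec mulrA mulrN mulfV // mulN1r /=.
rewrite addrC; apply/eqP; rewrite subr_eq0; apply/eqP; apply: eq_bigr => i _.
by have im := ltn_ord i; rewrite fa ?gb //=; lia.
Qed.

Lemma isLS_s0 : isLS s0.
Proof. by exists 0. Qed.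

Lemma isLS_sadd f g : isLS f -> isLS g -> isLS (sadd f g).
Proof.
move=> [N fN] [M gM]; exists (Num.max N M).
by apply: vanish_above_sadd; [apply: vanish_above_le fN _ | apply: vanish_above_le gM _]; lia.
Qed.

Lemma isLS_sopp f : isLS f -> isLS (sopp f).
Proof. by move=> [N fN]; exists N => n Nn; rewrite /sopp fN ?oppr0. Qed.

Lemma isLS_smul f g : isLS f -> isLS g -> isLS (smul f g).
Proof. by move=> [N fN] [M gM]; exists (N + M); apply: vanish_above_smul. Qed.

Lemma isLS_polyS p : isLS (polyS p).
Proof. by exists (size p)%:Z; apply: vanish_above_polyS. Qed.

Lemma sinv_spec f : isLS f -> f <> s0 -> isLS (sinv f) /\ smul f (sinv f) = sone.
Proof. by move=> fLS f0; apply: (epsilon_spec (inhabits s0) _ (smul_inverse_exists fLS f0)). Qed.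

Lemma smul1 f : isLS f -> smul sone f = f.
Proof.
move=> [N fN]; have -> : sone = polyS (1 *: 'X^0) by rewrite scale1r expr0.
by rewrite (smul_monomial _ _ fN); apply: funext => n; rewrite mul1r subr0.
Qed.

(** * The field of Laurent series *)

Record laurent := Laurent { ser : series; serP : `[< isLS ser >] }.
HB.instance Definition _ := [isSub for ser].
HB.instance Definition _ := [Choice of laurent by <:].

Lemma isLS_ser (x : laurent) : isLS (ser x).
Proof. exact: asboolW (serP x). Qed.

Lemma vanish_above_ser (x : laurent) : vanish_above (ser x) (lsb (ser x)).
Proof. exact: vanish_above_lsb (isLS_ser x). Qed.
(* [vanish_above] unfolds to a product, which would make [x] implicit. *)
Arguments vanish_above_ser : clear implicits.

Lemma ser_inj : injective ser.
Proof. exact: val_inj. Qed.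

Definition laurent_zero := Laurent (asboolT isLS_s0).
Definition laurent_add (x y : laurent) := Laurent (asboolT (isLS_sadd (isLS_ser x) (isLS_ser y))).
Definition laurent_opp (x : laurent) := Laurent (asboolT (isLS_sopp (isLS_ser x))).
Definition laurent_mul (x y : laurent) := Laurent (asboolT (isLS_smul (isLS_ser x) (isLS_ser y))).
Definition laurent_one := Laurent (asboolT (isLS_polyS 1)).

Lemma laurent_addA : associative laurent_add.
Proof. by move=> x y z; apply: ser_inj; apply: funext => n; rewrite /= /sadd addrA. Qed.

Lemma laurent_addC : commutative laurent_add.
Proof. by move=> x y; apply: ser_inj; apply: funext => n; rewrite /= /sadd addrC. Qed.

Lemma laurent_add0 : left_id laurent_zero laurent_add.
Proof. by move=> x; apply: ser_inj; apply: funext => n; rewrite /= /sadd add0r. Qed.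

Lemma laurent_addN : left_inverse laurent_zero laurent_opp laurent_add.
Proof. by move=> x; apply: ser_inj; apply: funext => n; rewrite /= /sadd /sopp addNr. Qed.

HB.instance Definition _ :=
  GRing.isZmodule.Build laurent laurent_addA laurent_addC laurent_add0 laurent_addN.

Lemma laurent_mulA : associative laurent_mul.
Proof.
move=> x y z; apply: ser_inj => /=; symmetry.
exact: smulA (vanish_above_ser x) (vanish_above_ser y) (vanish_above_ser z).
Qed.

Lemma laurent_mulC : commutative laurent_mul.
Proof.
by move=> x y; apply: ser_inj => /=; apply: smulC (vanish_above_ser x) (vanish_above_ser y).
Qed.

Lemma laurent_mul1 : left_id laurent_one laurent_mul.
Proof. by move=> x; apply: ser_inj => /=; apply: smul1 (isLS_ser x). Qed.

Lemma laurent_mulDl : left_distributive laurent_mul laurent_add.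
Proof.
move=> x y z; apply: ser_inj => /=; pose N := Num.max (lsb (ser x)) (lsb (ser y)).
apply: (smulDl (N := N) _ _ (vanish_above_ser z)).
  by apply: vanish_above_le (vanish_above_ser x) _; rewrite /N; lia.
by apply: vanish_above_le (vanish_above_ser y) _; rewrite /N; lia.
Qed.

Lemma laurent_one_neq0 : laurent_one != laurent_zero.
Proof. by apply/eqP => /(congr1 (fun x => ser x 0)) /=; rewrite coef1 => /eqP. Qed.

HB.instance Definition _ := GRing.Zmodule_isComNzRing.Build laurent
  laurent_mulA laurent_mulC laurent_mul1 laurent_mulDl laurent_one_neq0.

Lemma ser_eq0 (x : laurent) : (ser x = s0) <-> x = 0.
Proof. by split => [x0|->]; first exact: ser_inj. Qed.

Definition laurent_inv (x : laurent) : laurent :=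
  match pselect (ser x <> s0) with
  | left x0 => Laurent (asboolT (proj1 (sinv_spec (isLS_ser x) x0)))
  | right _ => 0
  end.

Lemma laurent_mulV : forall x : laurent, x != 0 -> laurent_inv x * x = 1.
Proof.
move=> x x0; rewrite /laurent_inv; case: pselect => [x0'|]; last first.
  by move=> /contrapT/ser_eq0 x_eq0; rewrite x_eq0 eqxx in x0.
have [[N iN] inv_x] := sinv_spec (isLS_ser x) x0'.
by apply: ser_inj; rewrite /= -/sone -inv_x; apply: smulC iN (vanish_above_ser x).
Qed.

Lemma laurent_inv0 : laurent_inv 0 = 0.
Proof. by rewrite /laurent_inv; case: pselect. Qed.

HB.instance Definition _ := GRing.ComNzRing_isField.Build laurent laurent_mulV laurent_inv0.

Lemma serV (x : laurent) : x != 0 -> ser x^-1 = sinv (ser x).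
Proof.
move=> x0; rewrite /GRing.inv /= /laurent_inv; case: pselect => // /contrapT/ser_eq0 x_eq0.
by rewrite x_eq0 eqxx in x0.
Qed.

Lemma serD (x y : laurent) : ser (x + y) = sadd (ser x) (ser y).
Proof. by []. Qed.

Lemma serM (x y : laurent) : ser (x * y) = smul (ser x) (ser y).
Proof. by []. Qed.

Definition to_laurent (f : series) : laurent :=
  if pselect (isLS f) is left fLS then Laurent (asboolT fLS) else 0.

Lemma to_laurentK f : isLS f -> ser (to_laurent f) = f.
Proof. by rewrite /to_laurent; case: pselect. Qed.

Definition lpoly (p : {poly rat}) : laurent := Laurent (asboolT (isLS_polyS p)).

Lemma lpoly_is_zmod_morphism : zmod_morphism lpoly.
Proof. by move=> p q; apply: ser_inj; apply: funext => [[n|n]] //=; rewrite /sadd /sopp ?coefB. Qed.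

HB.instance Definition _ := GRing.isZmodMorphism.Build _ _ lpoly lpoly_is_zmod_morphism.

Lemma lpoly_monomialM c k q : lpoly (c *: 'X^k * q) = lpoly (c *: 'X^k) * lpoly q.
Proof.
apply: ser_inj; rewrite /= (smul_monomial _ _ (@vanish_above_polyS q)) -scalerAl.
apply: funext => [[n|n]] /=; last first.
  by rewrite (_ : Negz n - k%:Z = Negz (n + k)) ?mulr0 // !NegzE; lia.
rewrite coefZ coefXnM; case: ltnP => [nk|kn]; last by have -> : n%:Z - k%:Z = (n - k)%N by lia.
by have -> : n%:Z - k%:Z = Negz (k - n).-1 by rewrite NegzE; lia.
Qed.

Lemma lpoly_is_monoid_morphism : monoid_morphism lpoly.
Proof.
split=> // p q; rewrite -[p]coefK poly_def !big_distrl !raddf_sum /= big_distrl /=.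
by apply: eq_bigr => i _; apply: lpoly_monomialM.
Qed.

HB.instance Definition _ := GRing.isMonoidMorphism.Build _ _ lpoly lpoly_is_monoid_morphism.

Lemma lpoly_eq0 p : (lpoly p == 0) = (p == 0).
Proof.
apply/eqP/eqP => [/(congr1 ser) p0|->]; last exact: raddf0.
by apply/polyP => i; rewrite coef0; have := congr1 (fun f => f (Posz i)) p0.
Qed.

Lemma natr_laurent_neq0 n : (0 < n)%N -> n%:R != 0 :> laurent.
Proof.
by move=> n0; rewrite -(rmorph_nat lpoly) lpoly_eq0 -polyC_natr polyC_eq0 pnatr_eq0 -lt0n.
Qed.

(** * Degree *)

Definition ldeg (x : laurent) : int :=
  epsilon (inhabits 0) (fun n => ser x n != 0 /\ vanish_above (ser x) n).

Lemma ldeg_unique (x : laurent) n : ser x n != 0 -> vanish_above (ser x) n -> ldeg x = n.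
Proof.
move=> xn x_van; have [xd d_van] : ser x (ldeg x) != 0 /\ vanish_above (ser x) (ldeg x).
  by apply: (epsilon_spec (inhabits 0) (fun n => ser x n != 0 /\ vanish_above (ser x) n)); exists n.
case: (ltrgtP (ldeg x) n) => // [/d_van x0 | /x_van x0].
  by rewrite x0 eqxx in xn.
by rewrite x0 eqxx in xd.
Qed.

Lemma ldegP (x : laurent) : x != 0 -> ser x (ldeg x) != 0 /\ vanish_above (ser x) (ldeg x).
Proof.
move=> x0; have /exists_top_coef [|n [xn x_van]] := vanish_above_ser x.
  by move/ser_eq0/eqP; rewrite (negbTE x0).
by rewrite (ldeg_unique xn x_van).
Qed.

Lemma ldegM (x y : laurent) : x != 0 -> y != 0 -> ldeg (x * y) = ldeg x + ldeg y.
Proof.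
move=> /ldegP [xd x_van] /ldegP [yd y_van]; apply: ldeg_unique; last exact: vanish_above_smul.
rewrite -[ldeg x + ldeg y]subr0 /= (smul_top_coef (K := 1) x_van y_van) //.
by rewrite coefM big_ord1 !top_poly_coef //= !subr0 mulf_neq0.
Qed.

Lemma ldegN (x : laurent) : ldeg (- x) = ldeg x.
Proof.
have [->|/ldegP [xd x_van]] := eqVneq x 0; first by rewrite oppr0.
by apply: ldeg_unique => [|n /x_van]; rewrite /= /sopp ?oppr_eq0 // => ->; rewrite oppr0.
Qed.

Lemma vanish_above_ldeg (x : laurent) n : (x != 0 -> ldeg x <= n) -> vanish_above (ser x) n.
Proof.
move=> xn; have [-> //|x0] := eqVneq x 0.
by have [_ x_van] := ldegP x0; apply: vanish_above_le x_van (xn x0).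
Qed.

Lemma ldegDl (x y : laurent) : x != 0 -> (y != 0 -> ldeg y < ldeg x) ->
  x + y != 0 /\ ldeg (x + y) = ldeg x.
Proof.
move=> x0 yx; have [xd x_van] := ldegP x0.
have y_van : vanish_above (ser y) (ldeg x - 1).
  by apply: vanish_above_ldeg => /yx; lia.
have top : ser (x + y) (ldeg x) = ser x (ldeg x) by rewrite /= /sadd y_van ?addr0 //; lia.
have xy0 : x + y != 0 by apply: contraNneq xd => xy; rewrite -top xy.
split=> //; apply: ldeg_unique; first by rewrite top.
by apply: vanish_above_sadd x_van (vanish_above_le y_van _); lia.
Qed.

Lemma ldeg_lpolyC c : c != 0 -> ldeg (lpoly c%:P) = 0.
Proof.
move=> c0; apply: ldeg_unique; first by rewrite /= coefC.
by move=> [k|k] //= k0; rewrite coefC; case: eqP => // k_eq; rewrite k_eq in k0.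
Qed.

Lemma deg_ser (x : laurent) : deg (ser x) = if x == 0 then -oo%E else (ldeg x)%:E.
Proof.
rewrite /deg; set P := fun d => _ \/ _.
have P_eq d : P d -> d = if x == 0 then -oo%E else (ldeg x)%:E.
  case=> [[/ser_eq0 -> ->]|[n [-> [xn x_van]]]]; first by rewrite eqxx.
  have x0 : x != 0 by apply: contraNneq xn => ->.
  by rewrite (negbTE x0) (ldeg_unique xn x_van).
apply: P_eq; apply: epsilon_spec; rewrite /P.
have [->|/ldegP [xd x_van]] := eqVneq x 0; first by exists -oo%E; left.
by exists (ldeg x)%:E; right; exists (ldeg x).
Qed.

Lemma ldeg_lpoly p : p != 0 -> ldeg (lpoly p) = (size p).-1.
Proof.
move=> p0; have sp : (0 < size p)%N by rewrite size_poly_gt0.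
apply: ldeg_unique => [|[k|k] //]; first by rewrite /= -lead_coefE lead_coef_eq0.
by rewrite ltz_nat /= => kp; apply: nth_default; lia.
Qed.

Lemma ldegV (x : laurent) : x != 0 -> ldeg x^-1 = - ldeg x.
Proof.
move=> x0; have := ldegM x0 (invr_neq0 x0).
by rewrite mulfV // -(rmorph1 lpoly) -polyC1 ldeg_lpolyC ?oner_eq0 //; lia.
Qed.

Lemma lpoly_size_lt (g : laurent) P Q : P != 0 -> 0 < ldeg g ->
  lpoly P = g * lpoly Q -> Q != 0 /\ (size Q < size P)%N.
Proof.
move=> P0 g_gt PgQ; have : g * lpoly Q != 0 by rewrite -PgQ lpoly_eq0.
rewrite mulf_eq0 negb_or lpoly_eq0 => /andP[g0 Q0]; split=> //.
have := congr1 ldeg PgQ; rewrite ldegM ?lpoly_eq0 // !ldeg_lpoly //.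
have := size_poly_gt0 Q; rewrite Q0; lia.
Qed.

Lemma exists_sign_change (S : Type) (P : S -> Prop) (next prev : S -> S) (u : S -> int) :
  (forall s, P s -> P (next s)) -> (forall s, P s -> P (prev s)) ->
  (forall s, next (prev s) = s) -> (forall s, P s -> u s < u (next s)) ->
  forall s, P s -> exists2 t, P t & u t < 0 <= u (next t).
Proof.
move=> Pnext Pprev nextK u_next s Ps; have [n] := ubnP (absz (u s)).
case: (ltrP (u s) 0) => us.
  elim: n s Ps us => // n IH s Ps us usn.
  case: (ltrP (u (next s)) 0) => [uns|]; last by exists s => //; apply/andP.
  by apply: IH (Pnext _ Ps) _ _ => //; have := u_next s Ps; lia.
elim: n s Ps us => // n IH s Ps us usn.
have Pps := Pprev s Ps; have := u_next _ Pps; rewrite nextK => ups.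
case: (ltrP (u (prev s)) 0) => [ups0|ups0]; first by exists (prev s); rewrite ?nextK ?ups0.
by apply: IH Pps _ _ => //; lia.
Qed.

(** * Chains of reduced forms *)

Definition chain_root (a b : int -> laurent) (rho : laurent) i := (rho - b i) / (2 * a i).

Definition qval (a b c : int -> laurent) i (x y : laurent) :=
  a i * x ^+ 2 + b i * x * y + c i * y ^+ 2.

Record reduced_chain (a b c : int -> laurent) (r : laurent) (delta : int -> {poly rat}) :
  Prop := ReducedChain {
  chain_disc : forall i, b i ^+ 2 - 4 * a i * c i = r ^+ 2;
  chain_a : forall i, a (i + 1) = c i;
  chain_b : forall i, b (i + 1) = - b i - 2 * c i * lpoly (delta i);
  chain_c : forall i, c (i + 1) = a i + b i * lpoly (delta i) + c i * lpoly (delta i) ^+ 2;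
  chain_a_neq0 : forall i, a i != 0;
  chain_root1_neq0 : forall i, chain_root a b r i != 0;
  chain_root1_ldeg : forall i, ldeg (chain_root a b r i) < 0;
  chain_root2_neq0 : forall i, chain_root a b (- r) i != 0;
  chain_root2_ldeg : forall i, 0 < ldeg (chain_root a b (- r) i) }.

Lemma pair_next_neq0 (R : nzRingType) (d X Y : R) :
  (X, Y) != (0, 0) -> (d * X - Y, X) != (0, 0).
Proof.
by rewrite !xpair_eqE; have [->|_] := eqVneq X 0; rewrite ?mulr0 ?sub0r ?oppr_eq0 ?andbT ?andbF.
Qed.

Lemma pair_prev_neq0 (R : nzRingType) (d X Y : R) :
  (X, Y) != (0, 0) -> (Y, d * Y - X) != (0, 0).
Proof.
by rewrite !xpair_eqE; have [->|_] := eqVneq Y 0; rewrite ?mulr0 ?sub0r ?oppr_eq0 ?andbT ?andbF.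
Qed.

(* [(i, X, Y)] stands for the vector (X, Y) in the coordinates of the [i]-th form;
   [next_state] applies the transformation (0 1; -1 delta_i). *)
Definition state := (int * {poly rat} * {poly rat})%type.

Definition next_state (delta : int -> {poly rat}) (st : state) : state :=
  let: (i, X, Y) := st in (i + 1, delta i * X - Y, X).

Definition prev_state (delta : int -> {poly rat}) (st : state) : state :=
  let: (i, X, Y) := st in (i - 1, Y, delta (i - 1) * Y - X).

Lemma next_prev_state delta : cancel (prev_state delta) (next_state delta).
Proof. by case=> [[i X] Y] /=; rewrite subrK opprB addrCA subrr addr0. Qed.

Section ReducedChain.
Variables (a b c : int -> laurent) (r : laurent) (delta : int -> {poly rat}).
Hypothesis ch : reduced_chain a b c r delta.

Local Notation root := (chain_root a b).
Local Notation f := (root r).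
Local Notation s := (root (- r)).
Local Notation d i := (lpoly (delta i)).
Local Notation v := (qval a b c).

Lemma chain_c_eq i : c i = (b i ^+ 2 - r ^+ 2) / (4 * a i).
Proof.
have a0 := chain_a_neq0 ch i; rewrite -(chain_disc ch i).
by field; rewrite a0 natr_laurent_neq0.
Qed.

Lemma chain_c_neq0 i : c i != 0.
Proof. by rewrite -(chain_a ch) (chain_a_neq0 ch). Qed.

Lemma qval_factor i x y : v i x y = a i * (x - f i * y) * (x - s i * y).
Proof.
have a0 := chain_a_neq0 ch i; rewrite /qval /chain_root chain_c_eq.
by field; rewrite a0 !natr_laurent_neq0.
Qed.

Lemma chain_roots_mul i : a i * f i * s i = c i.
Proof.
have a0 := chain_a_neq0 ch i; rewrite /chain_root chain_c_eq.
by field; rewrite a0 !natr_laurent_neq0.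
Qed.

Lemma qval_next i x y : v i x y = v (i + 1) (d i * x - y) x.
Proof. by rewrite /qval (chain_a ch) (chain_b ch) (chain_c ch); ring. Qed.

Lemma chain_root_next rho i : rho ^+ 2 = r ^+ 2 -> root rho i != 0 ->
  root rho (i + 1) = d i - (root rho i)^-1.
Proof.
move=> rho2 root0; have a0 := chain_a_neq0 ch i; have c0 := chain_c_neq0 i.
have rb0 : rho - b i != 0 by move: root0; rewrite mulf_eq0 negb_or => /andP[].
have cE : c i = (b i ^+ 2 - rho ^+ 2) / (4 * a i) by rewrite rho2 chain_c_eq.
have bb0 : b i ^+ 2 - rho ^+ 2 != 0 by move: c0; rewrite cE mulf_eq0 negb_or => /andP[].
rewrite /chain_root (chain_a ch) (chain_b ch) cE.
by field; rewrite a0 rb0 bb0 !natr_laurent_neq0.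
Qed.

Lemma linear_factor_next rho i x y : rho ^+ 2 = r ^+ 2 -> root rho i != 0 ->
  x - root rho i * y = root rho i * (d i * x - y - root rho (i + 1) * x).
Proof. by move=> rho2 g0; rewrite chain_root_next //; field. Qed.

Lemma root1_linear_next i X Y : lpoly X - f i * lpoly Y =
  f i * (lpoly (delta i * X - Y) - f (i + 1) * lpoly X).
Proof.
by rewrite rmorphB rmorphM; apply: linear_factor_next; rewrite ?(chain_root1_neq0 ch).
Qed.

(* If X = f_i Y then (delta_i X - Y, X) satisfies the same relation for f_(i+1),
   with a shorter second entry since deg f_i < 0. *)
Lemma root1_linear_neq0 i X Y : (X, Y) != (0, 0) -> lpoly X - f i * lpoly Y != 0.
Proof.
have [n] := ubnP (size Y); elim: n i X Y => // n IH i X Y sY XY0.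
apply/negP; rewrite subr_eq0 => /eqP XfY; have f0 := chain_root1_neq0 ch i.
have Y0 : Y != 0.
  apply: contraNneq XY0 => Y0; move/eqP: XfY; rewrite Y0 raddf0 mulr0 lpoly_eq0.
  by move/eqP->.
have f_inv_gt0 : 0 < ldeg (f i)^-1.
  by rewrite ldegV //; have := chain_root1_ldeg ch i; lia.
have [_ sX] : X != 0 /\ (size X < size Y)%N.
  by apply: (lpoly_size_lt Y0 f_inv_gt0); rewrite XfY mulKf.
have /negP := IH (i + 1) _ _ (leq_trans sX sY) (pair_next_neq0 (delta i) XY0).
apply; apply/eqP; have := root1_linear_next i X Y.
by rewrite {1}XfY subrr => /esym/eqP; rewrite mulf_eq0 (negbTE f0) => /eqP.
Qed.

(* Symmetrically X = s_i Y propagates backwards, and deg s_(i-1) > 0 shortens the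
   second entry. *)
Lemma root2_linear_neq0 i X Y : (X, Y) != (0, 0) -> lpoly X - s i * lpoly Y != 0.
Proof.
have [n] := ubnP (size Y); elim: n i X Y => // n IH i X Y sY XY0.
apply/negP; rewrite subr_eq0 => /eqP XsY; have s0 := chain_root2_neq0 ch (i - 1).
have Y0 : Y != 0.
  apply: contraNneq XY0 => Y0; move/eqP: XsY; rewrite Y0 raddf0 mulr0 lpoly_eq0.
  by move/eqP->.
pose Y' := delta (i - 1) * Y - X.
have Y'E : lpoly Y' = d (i - 1) * lpoly Y - lpoly X by rewrite rmorphB rmorphM.
have YsY' : lpoly Y = s (i - 1) * lpoly Y'.
  apply/eqP; rewrite -subr_eq0; apply/eqP.
  rewrite (linear_factor_next (lpoly Y) (lpoly Y') (sqrrN r) s0) subrK.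
  by rewrite Y'E opprB addrCA subrr addr0 XsY subrr mulr0.
have [_ sY'] := lpoly_size_lt Y0 (chain_root2_ldeg ch (i - 1)) YsY'.
have /negP := IH (i - 1) _ _ (leq_trans sY' sY) (pair_prev_neq0 (delta (i - 1)) XY0).
by apply; rewrite YsY' subrr.
Qed.

Lemma ldeg_root1_linear_next i X Y : (X, Y) != (0, 0) ->
  ldeg (lpoly X - f i * lpoly Y) =
  ldeg (f i) + ldeg (lpoly (delta i * X - Y) - f (i + 1) * lpoly X).
Proof.
move=> XY0; rewrite root1_linear_next ldegM ?(chain_root1_neq0 ch) //.
exact/root1_linear_neq0/pair_next_neq0.
Qed.

Lemma qval_neq0 i X Y : (X, Y) != (0, 0) -> v i (lpoly X) (lpoly Y) != 0.
Proof.
move=> XY0; rewrite qval_factor !mulf_neq0 ?(chain_a_neq0 ch) //.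
  exact: root1_linear_neq0.
exact: root2_linear_neq0.
Qed.

(* Here X - s_i Y is dominated by (f_i - s_i) Y, and a_(i+1) = a_i f_i s_i. *)
Lemma ldeg_qval_crossing i X Y : (X, Y) != (0, 0) ->
  ldeg (f i) <= ldeg (lpoly X - f i * lpoly Y) < 0 ->
  ldeg (a (i + 1)) <= ldeg (v i (lpoly X) (lpoly Y)).
Proof.
move=> XY0; set L := lpoly X - f i * lpoly Y; move=> /andP[fL L0].
have [f0 s0] := (chain_root1_neq0 ch i, chain_root2_neq0 ch i).
have [f_lt s_gt] := (chain_root1_ldeg ch i, chain_root2_ldeg ch i).
have Y0 : Y != 0.
  apply: contraTneq L0 => Y0; have X0 : X != 0 by move: XY0; rewrite Y0 xpair_eqE eqxx andbT.
  by rewrite -leNgt /L Y0 raddf0 mulr0 subr0 ldeg_lpoly //.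
have [sf0 ldeg_sf] : s i - f i != 0 /\ ldeg (s i - f i) = ldeg (s i).
  by apply: ldegDl => // _; rewrite ldegN; lia.
have ldeg_sfY : ldeg ((s i - f i) * lpoly Y) = ldeg (s i) + (size Y).-1.
  by rewrite ldegM ?lpoly_eq0 // ldeg_sf ldeg_lpoly.
have [N0 ldeg_N] : - ((s i - f i) * lpoly Y) + L != 0 /\
    ldeg (- ((s i - f i) * lpoly Y) + L) = ldeg (- ((s i - f i) * lpoly Y)).
  by apply: ldegDl => [|_]; rewrite ?oppr_eq0 ?mulf_neq0 ?lpoly_eq0 // ldegN ldeg_sfY; lia.
have NE : lpoly X - s i * lpoly Y = - ((s i - f i) * lpoly Y) + L by rewrite /L; ring.
have a0 := chain_a_neq0 ch i; have L_neq0 : L != 0 by apply: root1_linear_neq0.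
rewrite qval_factor (chain_a ch) -chain_roots_mul -/L NE.
rewrite (ldegM (mulf_neq0 a0 f0) s0) (ldegM a0 f0).
rewrite (ldegM (mulf_neq0 a0 L_neq0) N0) (ldegM a0 L_neq0) ldeg_N ldegN ldeg_sfY; lia.
Qed.

Lemma qval_ldeg_lower_bound i X Y : (X, Y) != (0, 0) ->
  exists j, ldeg (a j) <= ldeg (v i (lpoly X) (lpoly Y)).
Proof.
move=> XY0; set val := v i (lpoly X) (lpoly Y).
pose P (st : state) := let: (j, X', Y') := st in
  (X', Y') != (0, 0) /\ v j (lpoly X') (lpoly Y') = val.
pose u (st : state) := let: (j, X', Y') := st in ldeg (lpoly X' - f j * lpoly Y').
have Pnext st : P st -> P (next_state delta st).
  case: st => [[j X'] Y']; rewrite /P /= => -[XY'0 <-].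
  by split; [apply: pair_next_neq0 | rewrite [RHS]qval_next rmorphB rmorphM].
have Pprev st : P st -> P (prev_state delta st).
  case: st => [[j X'] Y']; rewrite /P /= => -[XY'0 <-].
  split; first exact: pair_prev_neq0.
  by rewrite qval_next rmorphB rmorphM subrK opprB addrCA subrr addr0.
have u_next st : P st -> u st < u (next_state delta st).
  case: st => [[j X'] Y'] [XY'0 _]; rewrite /u /= ldeg_root1_linear_next //.
  by have := chain_root1_ldeg ch j; lia.
have [[[j X'] Y'] [XY'0 <-] /= /andP[u_lt u_ge]] :=
  exists_sign_change Pnext Pprev (next_prev_state delta) u_next (s := (i, X, Y)) (conj XY0 erefl).
exists (j + 1); apply: ldeg_qval_crossing => //.
by rewrite u_lt ldeg_root1_linear_next //; lia.
Qed.
End ReducedChain.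

(** * The forms Phi_i *)

Lemma sscale_ser c (x : laurent) : sscale c (ser x) = ser (lpoly c%:P * x).
Proof.
rewrite /= -[c%:P]alg_polyC -[c%:A]/(c *: 'X^0) (smul_monomial _ _ (vanish_above_ser x)).
by apply: funext => n; rewrite subr0.
Qed.

Lemma isLS_sscale c f : c != 0 -> isLS (sscale c f) -> isLS f.
Proof.
move=> c0 [N cf]; exists N => n Nn; apply/eqP.
by have /eqP := cf n Nn; rewrite /sscale mulf_eq0 (negbTE c0).
Qed.

Lemma lpoly_natC n : lpoly n%:R%:P = n%:R.
Proof. by rewrite polyC_natr rmorph_nat. Qed.

Lemma evalq_ser (x y z : laurent) X Y : evalq (BQF (ser x) (ser y) (ser z)) X Y =
  ser (x * lpoly (X * X) + y * lpoly (X * Y) + z * lpoly (Y * Y)).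
Proof. by []. Qed.

Lemma transform_ser (x y z : laurent) p1 p2 p3 p4 :
  let: (l1, l2, l3, l4) := (lpoly p1, lpoly p2, lpoly p3, lpoly p4) in
  transform p1 p2 p3 p4 (BQF (ser x) (ser y) (ser z)) =
  BQF (ser (x * (l1 * l1) + y * (l1 * l3) + z * (l3 * l3)))
      (ser (2 * (x * (l1 * l2)) + y * (l1 * l4 + l2 * l3) + 2 * (z * (l3 * l4))))
      (ser (x * (l2 * l2) + y * (l2 * l4) + z * (l4 * l4))).
Proof. by rewrite /transform -lpoly_natC !serD -!sscale_ser !serM !serD !serM. Qed.

Lemma disc_ser (x y z : laurent) :
  disc (BQF (ser x) (ser y) (ser z)) = ser (y * y - 4 * (x * z)).
Proof. by rewrite /disc /= -!serM sscale_ser lpoly_natC. Qed.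

Lemma roots_ser (r x y z : laurent) : x != 0 ->
  first_root (ser r) (BQF (ser x) (ser y) (ser z)) = ser ((r - y) / (2 * x)) /\
  second_root (ser r) (BQF (ser x) (ser y) (ser z)) = ser ((- r - y) / (2 * x)).
Proof.
move=> x0; rewrite /first_root /second_root /sdiv /= sscale_ser lpoly_natC.
by rewrite -[sinv _]serV ?mulf_neq0 ?natr_laurent_neq0.
Qed.

Definition values (q : bqf) : set (\bar int) :=
  [set d | exists X Y : {poly rat}, (X, Y) != (0, 0) /\ d = deg (evalq q X Y)].

Lemma values_transform_ser (x y z : laurent) p1 p2 p3 p4 : p1 * p4 - p2 * p3 = 1 ->
  values (transform p1 p2 p3 p4 (BQF (ser x) (ser y) (ser z))) =
  values (BQF (ser x) (ser y) (ser z)).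
Proof.
move=> det; set q := BQF _ _ _.
have evalqE X Y : evalq (transform p1 p2 p3 p4 q) X Y =
    evalq q (p1 * X + p2 * Y) (p3 * X + p4 * Y).
  by rewrite transform_ser !evalq_ser; congr ser; rewrite !rmorphM !rmorphD !rmorphM; ring.
have inv X Y : X = p1 * (p4 * X - p2 * Y) + p2 * (p1 * Y - p3 * X) /\
               Y = p3 * (p4 * X - p2 * Y) + p4 * (p1 * Y - p3 * X).
  by split; rewrite -[LHS]mul1r -det; ring.
have inv' X Y : X = p4 * (p1 * X + p2 * Y) - p2 * (p3 * X + p4 * Y) /\
                Y = p1 * (p3 * X + p4 * Y) - p3 * (p1 * X + p2 * Y).
  by split; rewrite -[LHS]mul1r -det; ring.
apply/seteqP; split=> _ [X [Y [XY0 ->]]].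
  exists (p1 * X + p2 * Y), (p3 * X + p4 * Y); rewrite evalqE; split=> //.
  apply: contraNneq XY0 => -[X'0 Y'0].
  by move: (inv' X Y); rewrite X'0 Y'0 !mulr0 subrr => -[-> ->].
exists (p4 * X - p2 * Y), (p1 * Y - p3 * X).
have [eX eY] := inv X Y; rewrite evalqE -eX -eY; split=> //.
apply: contraNneq XY0 => -[X'0 Y'0].
by move: (inv X Y); rewrite X'0 Y'0 !mulr0 addr0 => -[-> ->].
Qed.

Lemma einf_eq (S T : set (\bar int)) : (T `<=` S)%classic ->
  (forall x, S x -> exists2 y, T y & (y <= x)%E) -> einf S = einf T.
Proof.
move=> TS S_ge; have lbE m : (forall x, S x -> (m <= x)%E) <-> (forall x, T x -> (m <= x)%E).
  split=> [mS x /TS /mS //|mT x /S_ge [y /mT my yx]]; exact: le_trans my yx.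
rewrite /einf; congr epsilon; apply: funext => m; apply: propext.
by split=> -[m_lb m_glb]; split=> [|m' /lbE]; by [apply/lbE | apply: m_glb].
Qed.

Lemma int_shift_const (T : Type) (u : int -> T) :
  (forall i, u (i + 1) = u i) -> forall i, u i = u 0.
Proof.
move=> u_step; elim/int_rect => [//|n IH|n IH]; first by rewrite -IH -[RHS]u_step; congr u; lia.
by rewrite -IH -[LHS]u_step; congr u; lia.
Qed.

Lemma sign_neq0 (i : int) : (-1) ^ i != 0 :> rat.
Proof. by rewrite expfz_neq0 // oppr_eq0 oner_eq0. Qed.

Definition Phi_coef (A : int -> series) i : laurent := lpoly ((-1) ^ i)%:P * to_laurent (A i).

Section PhiChain.
Variables (A B : int -> series) (sqD : series) (delta : int -> {poly rat}).
Hypotheses (A_LS : forall i, isLS (A i)) (B_LS : forall i, isLS (B i)) (sqD_LS : isLS sqD).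
Hypothesis Phi_disc : forall i, disc (Phi A B i) = smul sqD sqD.
Hypothesis Phi_reduced : forall i, reduced sqD (Phi A B i).
Hypothesis Phi_step : forall i, transform 0 1 (-1) (delta i) (Phi A B i) = Phi A B (i + 1).

Local Notation a := (Phi_coef A).
Local Notation b i := (to_laurent (B i)).
Local Notation r := (to_laurent sqD).

Lemma Phi_ser i : Phi A B i = BQF (ser (a i)) (ser (b i)) (ser (a (i + 1))).
Proof. by rewrite /Phi /Phi_coef -!sscale_ser !to_laurentK. Qed.

Lemma deg_Phi_coef i : deg (A i) = deg (ser (a i)).
Proof.
have sign0 : lpoly ((-1) ^ i)%:P != 0 by rewrite lpoly_eq0 polyC_eq0 sign_neq0.
rewrite -{1}(to_laurentK (A_LS i)) !deg_ser mulf_eq0 (negbTE sign0) /=.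
have [//|Ai0] := eqVneq (to_laurent (A i)) 0.
by rewrite ldegM // ldeg_lpolyC ?sign_neq0 ?add0r.
Qed.

Lemma Phi_chain : reduced_chain a (fun i => b i) (fun i => a (i + 1)) r delta.
Proof.
have a0 i : a i != 0.
  by have [+ _ _ _] := Phi_reduced i; rewrite Phi_ser => /eqP; apply: contraNneq => ->.
have roots i : first_root sqD (Phi A B i) = ser (chain_root a (fun i => b i) r i) /\
    second_root sqD (Phi A B i) = ser (chain_root a (fun i => b i) (- r) i).
  by have := roots_ser r (b i) (a (i + 1)) (a0 i); rewrite to_laurentK // -Phi_ser.
split=> // i.
- by apply: ser_inj; rewrite !expr2 -mulrA -disc_ser -Phi_ser Phi_disc serM to_laurentK.
- have := Phi_step i; rewrite !Phi_ser transform_ser rmorph0 rmorph1 rmorphN1.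
  by move=> /(congr1 qB) eB; rewrite -(ser_inj eB); ring.
- have := Phi_step i; rewrite !Phi_ser transform_ser rmorph0 rmorph1 rmorphN1.
  by move=> /(congr1 qC) eC; rewrite -(ser_inj eC); ring.
- by have [_ + _ _] := Phi_reduced i; rewrite (roots i).1; apply: contra_not_neq => ->.
- have [_ f0 + _] := Phi_reduced i; rewrite (roots i).1 deg_ser.
  case: eqP => [f_eq0|_]; last by rewrite lte_fin.
  by case: f0; rewrite (roots i).1 f_eq0.
- by have [_ _ _] := Phi_reduced i; rewrite (roots i).2 deg_ser; case: eqP.
- have [_ _ _] := Phi_reduced i; rewrite (roots i).2 deg_ser.
  by case: eqP => // _; rewrite lte_fin.
Qed.

Lemma values_Phi i : values (Phi A B i) = values (Phi A B 0).
Proof.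
move: i; apply: (@int_shift_const _ (fun i => values (Phi A B i))) => i.
by rewrite -Phi_step Phi_ser values_transform_ser // mul0r mul1r sub0r opprK.
Qed.

Lemma einf_values_Phi : einf (values (Phi A B 0)) = einf [set d | exists i, d = deg (A i)].
Proof.
have ch := Phi_chain.
apply: einf_eq => [_ [i ->]|_ [X [Y [XY0 ->]]]].
  rewrite -(values_Phi i) deg_Phi_coef; exists 1, 0; split; first by rewrite xpair_eqE oner_eq0.
  by rewrite Phi_ser evalq_ser !(mulr1, mulr0, rmorph1, rmorph0, addr0).
have [j aj] := qval_ldeg_lower_bound ch 0 XY0.
exists (deg (A j)); first by exists j.
rewrite Phi_ser evalq_ser deg_Phi_coef !deg_ser (negbTE (chain_a_neq0 ch j)).
rewrite (_ : _ + _ = qval a (fun i => b i) (fun i => a (i + 1)) 0 (lpoly X) (lpoly Y)).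
  by rewrite (negbTE (qval_neq0 ch 0 XY0)) lee_fin.
by rewrite /qval !rmorphM; ring.
Qed.
End PhiChain.

Lemma is_bqf_ser q : is_bqf q ->
  q = BQF (ser (to_laurent (qA q))) (ser (to_laurent (qB q))) (ser (to_laurent (qC q))).
Proof. by case: q => A B C [/= ? ? ? _]; rewrite !to_laurentK. Qed.

Theorem theorem8 (D sqD : series) (A B : int -> series)
  (delta : int -> {poly rat}) (Q : bqf) :
  isLS D -> D <> s0 -> isLS sqD -> smul sqD sqD = D ->
  (forall i : int, is_bqf (Phi A B i)) ->
  (forall i : int, indefinite (Phi A B i)) ->
  (forall i : int, disc (Phi A B i) = D) ->
  (forall i : int, reduced sqD (Phi A B i)) ->
  (forall i : int, transform 0 1 (-1) (delta i) (Phi A B i) = Phi A B (i + 1)) ->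
  is_bqf Q -> properly_equiv Q (Phi A B 0) ->
  mQ Q = einf [set d | exists i : int, d = deg (A i)].
Proof.
move=> _ _ sqD_LS sqD2 Phi_bqf _ Phi_disc Phi_red Phi_step Q_bqf Q_Phi.
have A_LS i : isLS (A i).
  by have [+ _ _ _] := Phi_bqf i; apply: isLS_sscale; apply: sign_neq0.
have B_LS i : isLS (B i) by have [_ + _ _] := Phi_bqf i.
have disc_sqD i : disc (Phi A B i) = smul sqD sqD by rewrite Phi_disc sqD2.
have values_Q : values Q = values (Phi A B 0).
  case: Q_Phi => -[p1 [p2 [p3 [p4 [det <-]]]]].
    by rewrite (is_bqf_ser Q_bqf) values_transform_ser.
  by rewrite (is_bqf_ser (Phi_bqf 0)) values_transform_ser.
rewrite /mQ -/(values Q) values_Q.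
exact: einf_values_Phi A_LS B_LS sqD_LS disc_sqD Phi_red Phi_step.
Qed.
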